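(* Every star is $\mathbb{Z}_2\times\mathbb{Z}_2$-cordial.
   Context: A star is a finite hypergraph with at least one edge, every edge having at least two vertices, in which there is a vertex $x$ (the center) contained in all edges, the edges are pairwise disjoint apart from $x$, and every vertex lies in some edge (edge sizes may differ). Let $A=\mathbb{Z}_2\times\mathbb{Z}_2$. For a hypergraph $H=(V,E)$ and a labeling $c:V\to A$, write $v_c(a)=|c^{-1}(a)|$; $c$ is $A$-friendly if $|v_c(a)-v_c(b)|\le 1$ for all $a,b\in A$. It induces $c^*:E\to A$, $c^*(e)=\sum_{v\in e}c(v)$; write $e_{c^*}(a)=|(c^* )^{-1}(a)|$. $H$ is $A$-cordial if it admits an $A$-friendly labeling $c$ with $|e_{c^*}(a)-e_{c^*}(b)|\le 1$ for all $a,b\in A$. *)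

From HB Require Import structures.
From mathcomp Require Import all_boot all_order all_algebra.
Set Implicit Arguments. Unset Strict Implicit. Unset Printing Implicit Defensive.
Import GRing.Theory.

Notation Agrp := ('Z_2 * 'Z_2)%type.

Definition is_star (V : finType) (E : {set {set V}}) : Prop :=
  E != set0 /\
  (forall e, e \in E -> 2 <= #|e|) /\
  exists x : V,
    (forall e, e \in E -> x \in e) /\
    (forall e1 e2, e1 \in E -> e2 \in E -> e1 != e2 -> e1 :&: e2 = [set x]) /\
    (forall v : V, exists2 e, e \in E & v \in e).

Definition vcount (V : finType) (c : V -> Agrp) (a : Agrp) : nat :=
  #|[set v | c v == a]|.

Definition edge_label (V : finType) (c : V -> Agrp) (e : {set V}) : Agrp :=
  (\sum_(v in e) c v)%R.

Definition ecount (V : finType) (E : {set {set V}}) (c : V -> Agrp) (a : Agrp)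
  : nat := #|[set e in E | edge_label c e == a]|.

Definition close1 (m n : nat) : bool := (m <= n.+1) && (n <= m.+1).

Definition A_friendly (V : finType) (c : V -> Agrp) : Prop :=
  forall a b : Agrp, close1 (vcount c a) (vcount c b).

Definition A_cordial (V : finType) (E : {set {set V}}) : Prop :=
  exists c : V -> Agrp, A_friendly c /\
    forall a b : Agrp, close1 (ecount E c a) (ecount E c b).

(* Only the label of the center and, for each petal (an edge minus the
   center), the multiset of its labels matter; so a labeling of a star whose
   petals have sizes [ks] is a center label with one label list of each size in
   [ks].  Appending one vertex of each label to a petal raises every vertex
   count by one and keeps the petal sum, since the elements of Z_2 x Z_2 add up
   to 0; hence petal sizes reduce to 1..4.  Appending a block of four petals in
   which every label occurs equally often and the four petal sums are distinct
   raises all vertex counts equally and all edge counts by one; such a block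
   exists for each of the ten multisets of four sizes in 1..4 whose sum is
   divisible by 4.  The multisets of sizes in 1..4 containing none of these ten
   have at most three petals of each size, and a search labels each of them,
   its output being checked by evaluation. *)

From mathcomp Require Import all_boot all_order all_algebra zify.
Set Implicit Arguments. Unset Strict Implicit. Unset Printing Implicit Defensive.
Import GRing.Theory.

Lemma close1_addr m n k : close1 (m + k) (n + k) = close1 m n.
Proof. by rewrite /close1 -!addSn !leq_add2r. Qed.

Lemma perm_map_lift (T U : eqType) (f : T -> U) (s : seq T) (t : seq U) :
  perm_eq (map f s) t -> exists2 s', perm_eq s s' & map f s' = t.
Proof.
elim: t s => [|y t IHt] s pst.
  by exists s => //; apply: size0nil; apply: perm_size pst.
have /mapP[z zs fz] : y \in map f s by rewrite (perm_mem pst) mem_head.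
have pz := perm_to_rem zs.
have /IHt[s' ps' fs'] : perm_eq (map f (rem z s)) t.
  by rewrite -(perm_cons y) -(permPr pst) fz -map_cons perm_map // perm_sym.
by exists (z :: s'); [rewrite (perm_trans pz) ?perm_cons | rewrite /= fs' fz].
Qed.

Definition sub_multiset (T : eqType) (s t : seq T) : bool :=
  all (fun x => count_mem x s <= count_mem x t) s.

Lemma sub_multisetP (T : eqType) (s t : seq T) :
  sub_multiset s t -> exists r, perm_eq (s ++ r) t.
Proof.
move=> /allP s_le_t; have [s' s't ss'] : exists2 s', subseq s' t & perm_eq s s'.
  apply/count_subseqP => y; by have [/s_le_t|/count_memPn ->] := boolP (y \in s).
have [r tr] := perm_to_subseq s't.
by exists r; rewrite perm_sym (perm_trans tr) // perm_cat2r perm_sym.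
Qed.

Lemma sub_multiset_perm (T : eqType) (s t t' : seq T) :
  perm_eq t t' -> sub_multiset s t = sub_multiset s t'.
Proof. by move=> /permP tt'; apply: eq_all => y; rewrite tt'. Qed.

Lemma map_nth_index (T : eqType) (U : Type) (d : U) (r : seq T) (s : seq U) :
  uniq r -> size s = size r -> [seq nth d s (index v r) | v <- r] = s.
Proof.
elim: r s => [|y r IHr] [|z s] //= /andP[y_notin_r uniq_r] [size_s].
rewrite eqxx -[in RHS](IHr s) //; congr (_ :: _); apply/eq_in_map => v v_r /=.
by have [y_v|] := eqVneq y v; first by rewrite y_v v_r in y_notin_r.
Qed.

(* Explicit lists, [foldr] and [sumn] stand for [enum] and big operators,
   which [vm_compute] cannot evaluate. *)
Definition labels : seq Agrp := [:: (0, 0); (0, 1); (1, 0); (1, 1)]%R.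

Lemma mem_labels (a : Agrp) : a \in labels.
Proof. by case: a => [[[|[|i]] ?] [[|[|j]] ?]]. Qed.

Lemma all_labelsP (P : pred Agrp) : reflect (forall a, P a) (all P labels).
Proof.
apply: (iffP allP) => [P_in a | P_all a _]; last exact: P_all.
exact: P_in (mem_labels a).
Qed.

Lemma count_labels (a : Agrp) : count_mem a labels = 1.
Proof. by apply/eqP; move: a; apply/all_labelsP. Qed.

Definition petal_sum (L : seq Agrp) : Agrp := foldr +%R 0%R L.

Lemma petal_sumE L : petal_sum L = (\sum_(a <- L) a)%R.
Proof. exact: foldrE. Qed.

Lemma petal_sum_labels : petal_sum labels = 0%R.
Proof. by apply/eqP. Qed.

Definition vertex_count (c0 : Agrp) (Ls : seq (seq Agrp)) (a : Agrp) : nat :=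
  (c0 == a) + sumn [seq count_mem a L | L <- Ls].

Definition edge_count (c0 : Agrp) (Ls : seq (seq Agrp)) (a : Agrp) : nat :=
  count (fun L => c0 + petal_sum L == a)%R Ls.

Definition balanced (c0 : Agrp) (Ls : seq (seq Agrp)) : bool :=
  all (fun a => all (fun b =>
    close1 (vertex_count c0 Ls a) (vertex_count c0 Ls b) &&
    close1 (edge_count c0 Ls a) (edge_count c0 Ls b)) labels) labels.

Definition cordial_petals (ks : seq nat) : Prop :=
  exists c0 Ls, map size Ls = ks /\ balanced c0 Ls.

Lemma balancedP c0 Ls : balanced c0 Ls -> forall a b,
  close1 (vertex_count c0 Ls a) (vertex_count c0 Ls b) /\
  close1 (edge_count c0 Ls a) (edge_count c0 Ls b).
Proof. by move=> /all_labelsP bal a b; have /all_labelsP/(_ b)/andP := bal a. Qed.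

Lemma balanced_shift c0 c0' Ls Ls' u w :
  (forall a, vertex_count c0' Ls' a = vertex_count c0 Ls a + u) ->
  (forall a, edge_count c0' Ls' a = edge_count c0 Ls a + w) ->
  balanced c0' Ls' = balanced c0 Ls.
Proof.
move=> vshift eshift; apply: eq_all => a; apply: eq_all => b.
by rewrite !vshift !eshift !close1_addr.
Qed.

Lemma balanced_perm c0 Ls Ls' : perm_eq Ls Ls' -> balanced c0 Ls' = balanced c0 Ls.
Proof.
move=> pLs; apply: (@balanced_shift _ _ _ _ 0 0) => a; rewrite addn0.
  by rewrite /vertex_count (perm_sumn (perm_map _ pLs)).
exact/esym/permP.
Qed.

Lemma cordial_petals_perm ks ks' :
  perm_eq ks ks' -> cordial_petals ks -> cordial_petals ks'.
Proof.
move=> pks [c0 [Ls [sizes bal]]]; rewrite -sizes in pks.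
have [Ls' pLs <-] := perm_map_lift pks.
by exists c0, Ls'; rewrite (balanced_perm _ pLs).
Qed.

Lemma cordial_petals_grow k ks :
  cordial_petals (k :: ks) -> cordial_petals (k + 4 :: ks).
Proof.
case=> c0 [[|L Ls] [] //= [<- <-] bal].
exists c0, ((L ++ labels) :: Ls); split; first by rewrite /= size_cat.
rewrite (@balanced_shift c0 c0 (L :: Ls) _ 1 0) // => a.
  by rewrite /vertex_count /= count_cat count_labels; lia.
rewrite /edge_count /= petal_sumE big_cat /= -!petal_sumE.
by rewrite petal_sum_labels addr0 addn0.
Qed.

Definition uniform_block (B : seq (seq Agrp)) : bool :=
  all (fun a =>
    (sumn [seq count_mem a L | L <- B] == sumn [seq count_mem 0%R L | L <- B]) &&
    (count (fun L => petal_sum L == a) B == count (fun L => petal_sum L == 0%R) B))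
  labels.

Lemma cordial_petals_cat_block B ks :
  uniform_block B -> cordial_petals ks -> cordial_petals (map size B ++ ks).
Proof.
move=> /all_labelsP unifB [c0 [Ls [<- bal]]]; exists c0, (B ++ Ls).
split; first by rewrite map_cat.
rewrite (@balanced_shift c0 c0 Ls _ (sumn [seq count_mem 0%R L | L <- B])
  (count (fun L => petal_sum L == 0%R) B)) // => a.
  have /andP[/eqP vB _] := unifB a.
  by rewrite /vertex_count map_cat sumn_cat vB; lia.
have /andP[_ /eqP <-] := unifB (a - c0)%R.
rewrite /edge_count count_cat addnC; congr (_ + _); apply: eq_count => L.
by rewrite [RHS]eq_sym subr_eq eq_sym addrC.
Qed.

Definition petal_sizes (n1 n2 n3 n4 : nat) : seq nat :=
  nseq n1 1 ++ nseq n2 2 ++ nseq n3 3 ++ nseq n4 4.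

Lemma perm_petal_sizes ks : all (fun k => 0 < k <= 4) ks ->
  perm_eq (petal_sizes (count_mem 1 ks) (count_mem 2 ks)
                       (count_mem 3 ks) (count_mem 4 ks)) ks.
Proof.
move=> /allP ks_small; apply/allP => k _ /=.
rewrite !count_cat !count_nseq /=.
case: k => [|[|[|[|[|k]]]]]; rewrite ?mul1n ?mul0n ?addn0 //=;
  by apply/eqP/esym/count_memPn/negP => /ks_small.
Qed.

(* The binary digits of [i < 4] are the coordinates of [label i], so [Nat.lxor]
   on codes is addition in [Agrp]. *)
Definition label (i : nat) : Agrp := nth 0%R labels i.

Definition blocks : seq (seq (seq Agrp)) := map (map (map label)) [::
  [:: [:: 0]; [:: 1]; [:: 2]; [:: 3]];
  [:: [:: 0]; [:: 1]; [:: 0; 2]; [:: 1; 2; 3; 3]];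
  [:: [:: 0]; [:: 1]; [:: 0; 1; 2]; [:: 2; 3; 3]];
  [:: [:: 0]; [:: 0; 1]; [:: 1; 2]; [:: 2; 3; 3]];
  [:: [:: 0]; [:: 0; 0; 1]; [:: 1; 2; 2; 2]; [:: 1; 3; 3; 3]];
  [:: [:: 0; 0]; [:: 1; 2]; [:: 1; 3]; [:: 2; 3]];
  [:: [:: 0; 0]; [:: 0; 1]; [:: 1; 2; 2; 2]; [:: 1; 3; 3; 3]];
  [:: [:: 0; 0]; [:: 0; 1; 2]; [:: 1; 1; 2]; [:: 2; 3; 3; 3]];
  [:: [:: 0; 0; 0]; [:: 1; 1; 1]; [:: 2; 2; 2]; [:: 3; 3; 3]];
  [:: [:: 0; 0; 0; 0]; [:: 1; 1; 1; 2]; [:: 1; 2; 2; 3]; [:: 2; 3; 3; 3]]].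

Lemma blocks_uniform : all (fun B => (size B == 4) && uniform_block B) blocks.
Proof. by vm_compute. Qed.

Definition reducible (ks : seq nat) : bool :=
  has (fun B => sub_multiset (map size B) ks) blocks.

Lemma reducible_perm ks ks' : perm_eq ks ks' -> reducible ks = reducible ks'.
Proof. by move=> pks; apply: eq_has => B; apply: sub_multiset_perm. Qed.

Lemma reducible_count k ks : 0 < k <= 4 -> 3 < count_mem k ks -> reducible ks.
Proof.
case: k => [|[|[|[|[|k]]]]] // _ k_many.
all: by rewrite /reducible /sub_multiset /= k_many /= ?orbT.
Qed.

Fixpoint first_some_suffix (A B : Type) (f : A -> seq A -> option B) (s : seq A) :
    option B :=
  if s is x :: s' then
    if f x s is Some y then Some y else first_some_suffix f s'
  else None.

Fixpoint code_multisets (s : seq nat) (k : nat) : seq (seq nat) :=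
  if s is i :: s' then
    flatten [seq [seq nseq n i ++ L | L <- code_multisets s' (k - n)]
            | n <- rev (iota 0 k.+1)]
  else if k is 0 then [:: [::]] else [::].

Definition nearly_constant (s : seq nat) : bool := all (fun m => all (close1 m) s) s.

(* Petals of equal size are interchangeable, so consecutive petals of size
   [k0] take their codes in the order of [code_multisets]: [cands] holds the
   codes still allowed for the next petal if it has size [k0]. *)
Fixpoint search_codes (vcap ecap c0 k0 : nat) (cands : seq (seq nat))
    (ks vc ec : seq nat) : option (seq (seq nat)) :=
  if ks is k :: ks' then
    first_some_suffix (fun L cands' =>
      let vc' := foldl incr_nth vc L in
      let ec' := incr_nth ec (foldl Nat.lxor c0 L) in
      if all (leq^~ vcap) vc' && all (leq^~ ecap) ec'
      then omap (cons L) (search_codes vcap ecap c0 k cands' ks' vc' ec') else None)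
      (if k == k0 then cands else code_multisets (iota 0 4) k)
  else if nearly_constant vc && nearly_constant ec then Some [::] else None.

(* [vcap] and [ecap] are the ceilings of the average vertex and edge counts. *)
Definition find_labels (ks : seq nat) : option (Agrp * seq (seq Agrp)) :=
  let vcap := (sumn ks + 4) %/ 4 in
  let ecap := (size ks + 3) %/ 4 in
  first_some_suffix (fun c0 _ =>
      omap (fun Ls => (label c0, map (map label) Ls))
        (search_codes vcap ecap c0 0 [::] ks (incr_nth (nseq 4 0) c0) (nseq 4 0)))
    (iota 0 4).

Definition certifies (ks : seq nat) (o : option (Agrp * seq (seq Agrp))) : bool :=
  if o is Some (c0, Ls) then (map size Ls == ks) && balanced c0 Ls else false.

Lemma certifiesP ks o : certifies ks o -> cordial_petals ks.
Proof. by case: o => [[c0 Ls] /andP[/eqP sizes bal]|] //; exists c0, Ls. Qed.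

Definition all_counts (P : nat -> nat -> nat -> nat -> bool) : bool :=
  all (fun n1 => all (fun n2 => all (fun n3 => all (P n1 n2 n3)
    (iota 0 4)) (iota 0 4)) (iota 0 4)) (iota 0 4).

Lemma all_countsP P : all_counts P ->
  forall n1 n2 n3 n4, n1 < 4 -> n2 < 4 -> n3 < 4 -> n4 < 4 -> P n1 n2 n3 n4.
Proof.
have mem4 n : n < 4 -> n \in iota 0 4 by rewrite mem_iota.
move=> /allP P_all n1 n2 n3 n4 /mem4/P_all/allP P1 /mem4/P1/allP P2 /mem4/P2/allP P3.
by move=> /mem4/P3.
Qed.

Lemma base_cases : all_counts (fun n1 n2 n3 n4 =>
  let ks := petal_sizes n1 n2 n3 n4 in
  if reducible ks then true else certifies ks (find_labels ks)).
Proof. by vm_compute. Qed.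

Lemma cordial_petals_small ks : all (fun k => 0 < k <= 4) ks -> cordial_petals ks.
Proof.
have [n] := ubnP (size ks); elim: n ks => // n IHn ks /ltnSE size_ks ks_small.
have [/hasP[B B_in subB] | irreducible] := boolP (reducible ks).
  have [r ks_Br] := sub_multisetP subB.
  have /andP[/eqP sizeB uniformB] := allP blocks_uniform B B_in.
  apply: (cordial_petals_perm ks_Br).
  apply: (cordial_petals_cat_block uniformB); apply: IHn.
    move: size_ks; rewrite -(perm_size ks_Br) size_cat size_map sizeB.
    by apply: leq_trans; rewrite addSn ltnS leq_addl.
  apply/allP => k k_r; apply: (allP ks_small).
  by rewrite -(perm_mem ks_Br) mem_cat k_r orbT.
have few k : 0 < k <= 4 -> count_mem k ks < 4.
  move=> k_small; rewrite ltnNge.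
  by apply: contra irreducible => /(reducible_count k_small).
have ks_sizes := perm_petal_sizes ks_small.
have := all_countsP base_cases (few 1 isT) (few 2 isT) (few 3 isT) (few 4 isT).
rewrite /= (reducible_perm ks_sizes) (negbTE irreducible) => /certifiesP.
exact: cordial_petals_perm.
Qed.

Lemma cordial_petals_pos ks : all (fun k => 0 < k) ks -> cordial_petals ks.
Proof.
have [n] := ubnP (sumn ks); elim: n ks => // n IHn ks /ltnSE sum_ks ks_pos.
have [/hasP[k k_in k_big] | /hasPn ks_le4] := boolP (has (fun k => 4 < k) ks).
  have ks_k : perm_eq (k :: rem k ks) ks by rewrite perm_sym perm_to_rem.
  apply: (cordial_petals_perm ks_k).
  rewrite -{1}(subnK (ltnW k_big)); apply/cordial_petals_grow/IHn.
    by move: sum_ks; rewrite -(perm_sumn ks_k) /=; lia.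
  by rewrite /= subn_gt0 k_big; apply/allP => j /mem_rem; apply: (allP ks_pos).
apply/cordial_petals_small/allP => k k_in.
by rewrite (allP ks_pos) //= leqNgt ks_le4.
Qed.

Section StarLabeling.

Variables (V : finType) (E : {set {set V}}) (x : V).
Hypothesis center_in : forall e, e \in E -> x \in e.
Hypothesis petals_disjoint :
  forall e1 e2, e1 \in E -> e2 \in E -> e1 != e2 -> e1 :&: e2 = [set x].
Hypothesis edges_cover : forall v, exists2 e, e \in E & v \in e.

Definition petal_of (v : V) : {set V} := odflt set0 [pick e in E | v \in e].

Lemma petal_ofE e v : e \in E -> v \in e :\ x -> petal_of v = e.
Proof.
move=> e_E /setD1P[v_x v_e]; rewrite /petal_of.
case: pickP => [e' /andP[e'_E v_e'] | /(_ e)]; last by rewrite e_E v_e.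
have [//|e'_e] := eqVneq e' e.
have /setP/(_ v) := petals_disjoint e'_E e_E e'_e.
by rewrite !inE v_e v_e' (negbTE v_x).
Qed.

Lemma petal_of_mem v : v != x -> petal_of v \in E /\ v \in petal_of v :\ x.
Proof.
move=> v_x; have [e e_E v_e] := edges_cover v.
have v_ex : v \in e :\ x by rewrite in_setD1 v_x v_e.
by rewrite (petal_ofE e_E v_ex).
Qed.

Lemma big_star (R : Type) (idx : R) (op : Monoid.com_law idx) (F : V -> R) :
  \big[op/idx]_v F v = op (F x) (\big[op/idx]_(e in E) \big[op/idx]_(v in e :\ x) F v).
Proof.
rewrite (bigD1 x) //=; congr (op _ _).
rewrite (partition_big petal_of (mem E)) => [|v /petal_of_mem[]//].
apply: eq_bigr => e e_E; apply: eq_bigl => v /=.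
apply/andP/idP => [[v_x /eqP <-] | v_ex]; first by case: (petal_of_mem v_x).
by rewrite (petal_ofE e_E v_ex); case/setD1P: v_ex.
Qed.

Variables (c0 : Agrp) (Ls : seq (seq Agrp)).
Hypothesis sizes_Ls : map size Ls = [seq #|e :\ x| | e <- enum E].

Definition petal_labels (e : {set V}) : seq Agrp := nth [::] Ls (index e (enum E)).

Definition star_labeling (v : V) : Agrp :=
  if v == x then c0
  else nth 0%R (petal_labels (petal_of v)) (index v (enum (petal_of v :\ x))).

Lemma map_petal_labels : [seq petal_labels e | e <- enum E] = Ls.
Proof.
by apply: map_nth_index; rewrite ?enum_uniq // -(size_map size) sizes_Ls size_map.
Qed.

Lemma size_petal_labels e : e \in E -> size (petal_labels e) = #|e :\ x|.
Proof.
move=> e_E; move: sizes_Ls; rewrite -map_petal_labels -map_comp.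
by move/eq_in_map/(_ e); rewrite mem_enum => /(_ e_E).
Qed.

Lemma big_petal (R : Type) (idx : R) (op : Monoid.com_law idx) (G : Agrp -> R) e :
  e \in E ->
  \big[op/idx]_(v in e :\ x) G (star_labeling v) =
  \big[op/idx]_(a <- petal_labels e) G a.
Proof.
move=> e_E.
have size_e : size (petal_labels e) = size (enum (e :\ x)).
  by rewrite size_petal_labels // cardE.
rewrite -big_enum -[in RHS](map_nth_index 0%R (enum_uniq _) size_e) big_map.
apply: eq_big_seq => v; rewrite mem_enum => v_ex.
by rewrite /star_labeling (petal_ofE e_E v_ex); case/setD1P: v_ex => /negbTE ->.
Qed.

Lemma vcount_star_labeling a : vcount star_labeling a = vertex_count c0 Ls a.
Proof.
rewrite /vcount -sum1dep_card big_mkcond (big_star addn) /= {1}/star_labeling eqxx.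
rewrite /vertex_count -map_petal_labels sumnE !big_map big_enum; congr (_ + _).
apply: eq_bigr => e e_E.
rewrite (big_petal addn (fun b => if b == a then 1 else 0)) //.
by rewrite -big_mkcond sum1_count.
Qed.

Lemma edge_label_star_labeling e :
  e \in E -> edge_label star_labeling e = (c0 + petal_sum (petal_labels e))%R.
Proof.
move=> e_E; rewrite /edge_label (bigD1 x) ?center_in //= /star_labeling eqxx.
rewrite petal_sumE -(big_petal +%R id) //; congr (_ + _)%R.
by apply: eq_bigl => v; rewrite in_setD1 andbC.
Qed.

Lemma ecount_star_labeling a : ecount E star_labeling a = edge_count c0 Ls a.
Proof.
rewrite /ecount -sum1dep_card -big_enum_cond sum1_count.
rewrite /edge_count -map_petal_labels count_map; apply: eq_in_count => e.
by rewrite mem_enum => e_E; rewrite /= edge_label_star_labeling.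
Qed.

End StarLabeling.

Theorem theorem4 (V : finType) (E : {set {set V}}) :
  is_star E -> A_cordial E.
Proof.
move=> [_ [edges_big [x [center_in [petals_disjoint edges_cover]]]]].
have petals_pos : all (fun k => 0 < k) [seq #|e :\ x| | e <- enum E].
  apply/allP => k /mapP[e]; rewrite mem_enum => e_E ->.
  by have := edges_big e e_E; rewrite (cardsD1 x e) center_in.
have [c0 [Ls [sizes_Ls bal]]] := cordial_petals_pos petals_pos.
have vcountE := vcount_star_labeling petals_disjoint edges_cover c0 sizes_Ls.
have ecountE := ecount_star_labeling center_in petals_disjoint c0 sizes_Ls.
exists (star_labeling E x c0 Ls).
by split=> a b; rewrite ?vcountE ?ecountE; case: (balancedP bal a b).
Qed.
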